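(* Fix integers $n\ge m\ge 3$ and $d$ with $n+1\le\binom{d+m-2}{m-1}$, and let $s=\lfloor d/2\rfloor$. Let $h_{max}$ be the maximal $h$-vector of Perazzo algebras with these invariants. Then $h_{max}$ is unimodal if and only if both (1) $\gamma_{s-1}<\beta_{s-1}$, and (2) $\alpha_{s-1}+\gamma_{s-1}\le\alpha_s+\beta_s$.
   Context: $K$ algebraically closed of characteristic zero. A Perazzo form of degree $d$ is $F=X_0p_0+\dots+X_np_n+G\in K[X_0,\dots,X_n,U_1,\dots,U_m]_d$ with $p_i\in K[U_1,\dots,U_m]_{d-1}$ algebraically dependent but linearly independent, $G\in K[U_1,\dots,U_m]_d$; $A_F=R/\operatorname{Ann}_RF$ with $R$ the ring of differential operators. $\alpha_i=\binom{m+i-1}{m-1}$, $\beta_i=\binom{d+m-i-1}{m-1}$, $\gamma_i=(n+1)\binom{m+i-2}{m-1}$. The maximal $h$-vector $h_{max}=(h_0,\dots,h_d)$ is symmetric ($h_i=h_{d-i}$) with $h_i=\min\{\alpha_i+\beta_i,\alpha_i+\gamma_i\}$ for $0\le i\le s$. A vector $(h_0,\dots,h_d)$ is unimodal if $h_0\le\dots\le h_k\ge h_{k+1}\ge\dots\ge h_d$ for some $k$. *)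

From mathcomp Require Import all_boot.
Set Implicit Arguments. Unset Strict Implicit. Unset Printing Implicit Defensive.

(* Invariants of Perazzo forms in K[X_0..X_n, U_1..U_m]_d (all in nat). *)
Definition alpha (m i : nat) : nat := 'C(m + i - 1, m - 1).
Definition beta (m d i : nat) : nat := 'C(d + m - i - 1, m - 1).
Definition gamma (n m i : nat) : nat := (n + 1) * 'C(m + i - 2, m - 1).

Definition hlow (n m d i : nat) : nat :=
  minn (alpha m i + beta m d i) (alpha m i + gamma n m i).

Definition hmax (n m d i : nat) : nat :=
  if i <= d./2 then hlow n m d i else hlow n m d (d - i).

Definition unimodal (h : nat -> nat) (d : nat) : Prop :=
  exists2 k, k <= d &
    (forall i, i < k -> h i <= h i.+1) /\ (forall i, k <= i -> i < d -> h i.+1 <= h i).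

From mathcomp Require Import all_boot.
From mathcomp Require Import zify.

(* Since h_max is symmetric, it is unimodal iff it is nondecreasing on its
   lower half, where h_i = min(alpha_i + beta_i, alpha_i + gamma_i).  For
   m >= 3 the sum alpha_i + beta_i strictly decreases on the lower half (the
   Pascal increment of beta dominates that of alpha), while alpha_i + gamma_i
   increases.  Hence the lower half is nondecreasing iff the minimum is still
   attained by alpha + gamma at s - 1 (condition (1)), and the step from s - 1
   to s does not drop (condition (2)). *)

Lemma ltn_bin2l x y k : 0 < k <= x -> x < y -> 'C(x, k) < 'C(y, k).
Proof.
case: k => // k /= kx xy.
apply: (@leq_trans 'C(x.+1, k.+1)); last exact: leq_bin2l.
by rewrite binS -addn1 leq_add2l bin_gt0 ltnW.
Qed.

Section SymmetricUnimodal.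

Variables (h : nat -> nat) (d : nat).
Hypothesis h_sym : forall i, i <= d -> h (d - i) = h i.

Lemma unimodal_symP :
  unimodal h d <-> forall i, i < d./2 -> h i <= h i.+1.
Proof.
split.
- case=> k _ [h_up h_down] i lt_i_half.
  have [lt_ik | le_ki] := ltnP i k; first exact: h_up.
  rewrite -[h i]h_sym; last lia.
  rewrite -[h i.+1]h_sym; last lia.
  have -> : d - i = (d - i.+1).+1 by lia.
  apply: h_down; lia.
- move=> h_up; exists d./2; first lia.
  split=> [i | i le_half_i lt_id]; first exact: h_up.
  rewrite -[h i]h_sym; last lia.
  rewrite -[h i.+1]h_sym; last lia.
  have -> : d - i = (d - i.+1).+1 by lia.
  have [lt_half | ge_half] := ltnP (d - i.+1) d./2; first exact: h_up.
  (* only the middle step of an odd-length vector remains, where h is flat *)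
  have -> : (d - i.+1).+1 = d - (d - i.+1) by lia.
  by rewrite [h (d - (d - _))]h_sym //; lia.
Qed.

End SymmetricUnimodal.

Section PerazzoInvariants.

Variables n m d : nat.

Lemma alpha_nondecreasing : {homo alpha m : i j / i <= j}.
Proof. by move=> i j le_ij; apply: leq_bin2l; lia. Qed.

Lemma gamma_nondecreasing : {homo gamma n m : i j / i <= j}.
Proof. by move=> i j le_ij; apply: leq_mul => //; apply: leq_bin2l; lia. Qed.

Lemma beta_nonincreasing : {homo beta m d : i j /~ i <= j}.
Proof. by move=> i j le_ij; apply: leq_bin2l; lia. Qed.

Lemma hmax_sym i : i <= d -> hmax n m d (d - i) = hmax n m d i.
Proof.
rewrite /hmax => le_id.
case: ifP => [le_half | /negbT]; case: ifP => [| /negbT]; try lia;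
  by move=> *; congr hlow; lia.
Qed.

Lemma hmax_lower i : i <= d./2 -> hmax n m d i = hlow n m d i.
Proof. by rewrite /hmax => ->. Qed.

Lemma hlow_gamma {t j} :
  gamma n m t <= beta m d t -> j <= t -> hlow n m d j = alpha m j + gamma n m j.
Proof.
move=> le_gb le_jt; apply/minn_idPr; rewrite leq_add2l.
apply: leq_trans (gamma_nondecreasing _ _ le_jt) _.
exact: leq_trans le_gb (beta_nonincreasing _ _ le_jt).
Qed.

Hypothesis m_ge3 : 3 <= m.

Lemma alpha_beta_decreasing t : t < d./2 ->
  alpha m t.+1 + beta m d t.+1 < alpha m t + beta m d t.
Proof.
move=> lt_t_half; have [p ->] : exists p, m = p.+3 by exists (m - 3); lia.
rewrite /alpha /beta.
have -> : p.+3 + t.+1 - 1 = (p + t + 2).+1 by lia.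
have -> : p.+3 + t - 1 = p + t + 2 by lia.
have -> : p.+3 - 1 = p.+2 by lia.
(* Pascal's rule: alpha gains 'C(p+t+2, p+1), beta loses 'C(y, p+1), y > p+t+2 *)
set y := d + p.+3 - t.+1 - 1.
have -> : d + p.+3 - t - 1 = y.+1 by rewrite /y; lia.
rewrite (binS (p + t + 2)) (binS y) -addnA ltn_add2l [X in _ < X]addnC ltn_add2r.
by apply: ltn_bin2l => //; rewrite /y; lia.
Qed.

Lemma hlow_nondecreasingP t : t < d./2 ->
  (forall i, i <= t -> hlow n m d i <= hlow n m d i.+1) <->
  gamma n m t < beta m d t /\
  alpha m t + gamma n m t <= alpha m t.+1 + beta m d t.+1.
Proof.
move=> lt_t_half; have decr := alpha_beta_decreasing _ lt_t_half.
split=> [hlow_up | [lt_gb step_t] i le_it].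
- have hlow_tS : hlow n m d t.+1 <= alpha m t.+1 + beta m d t.+1 := geq_minl _ _.
  have lt_hlow_t : hlow n m d t < alpha m t + beta m d t.
    exact: leq_ltn_trans (hlow_up t (leqnn t)) (leq_ltn_trans hlow_tS decr).
  have lt_gb : gamma n m t < beta m d t.
    by move: lt_hlow_t; rewrite /hlow gtn_min ltnn ltn_add2l.
  split=> //; rewrite -(hlow_gamma (ltnW lt_gb) (leqnn t)).
  exact: leq_trans (hlow_up t (leqnn t)) hlow_tS.
- rewrite (hlow_gamma (ltnW lt_gb) le_it).
  have le_ag : alpha m i + gamma n m i <= alpha m i.+1 + gamma n m i.+1.
    by rewrite leq_add ?alpha_nondecreasing ?gamma_nondecreasing.
  have [lt_it | ge_it] := ltnP i t; first by rewrite (hlow_gamma (ltnW lt_gb) lt_it).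
  have eq_it : i = t by lia.
  by subst i; rewrite leq_min step_t.
Qed.

End PerazzoInvariants.

Theorem theorem3p5 (n m d : nat) :
  3 <= m -> m <= n -> n + 1 <= 'C(d + m - 2, m - 1) ->
  let s := d./2 in
  unimodal (hmax n m d) d <->
  (gamma n m (s - 1) < beta m d (s - 1) /\
   alpha m (s - 1) + gamma n m (s - 1) <= alpha m s + beta m d s).
Proof.
move=> m_ge3 le_mn bin_bound s.
have d_ge2 : 2 <= d.
  rewrite leqNgt; apply/negP=> lt_d2.
  by have := @leq_bin2l (d + m - 2) (m - 1) (m - 1); rewrite binn; lia.
have [t s_eq] : exists t, s = t.+1 by exists s.-1; rewrite /s; lia.
rewrite s_eq subn1 /= unimodal_symP; last exact: hmax_sym.
rewrite -hlow_nondecreasingP //; last lia.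
split=> hmax_up i le_i.
- rewrite -!hmax_lower; try lia; apply: hmax_up; lia.
- rewrite !hmax_lower; try lia; apply: hmax_up; lia.
Qed.
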